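(* Let $S$ be a finite set, $B\subseteq S$, and $\gamma,\gamma_B\in(0,1)$. Define $R_B(s) = 1-\gamma_B$ if $s\in B$ and $R_B(s)=0$ otherwise, and $\Gamma_B(s) = \gamma_B$ if $s\in B$ and $\Gamma_B(s)=\gamma$ otherwise. For an infinite sequence $\sigma=\sigma[0]\sigma[1]\dots$ of elements of $S$ and $t\in\mathbb{N}$ let $$G_t(\sigma) = \sum_{i=0}^{\infty} R_B(\sigma[t+i]) \prod_{j=0}^{i-1} \Gamma_B(\sigma[t+j]),$$ with the empty product equal to $1$. Then for every such $\sigma$ and every $t\in\mathbb{N}$, $$0 \le \gamma G_{t+1}(\sigma) \le G_t(\sigma) \le 1-\gamma_B + \gamma_B G_{t+1}(\sigma) \le 1.$$ *)

From HB Require Import structures.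
From mathcomp Require Import all_boot all_order all_algebra.
From mathcomp Require Import all_classical all_reals all_analysis.
Set Implicit Arguments. Unset Strict Implicit. Unset Printing Implicit Defensive.
Import Order.TTheory GRing.Theory Num.Theory numFieldNormedType.Exports.
Local Open Scope ring_scope.

Section defs.
Variables (R : realType) (S : finType) (B : {set S}) (g gB : R).

Definition RB (s : S) : R := if s \in B then 1 - gB else 0.
Definition GammaB (s : S) : R := if s \in B then gB else g.

Definition Gterm (sigma : nat -> S) (t i : nat) : R :=
  RB (sigma (t + i)%N) * \prod_(j < i) GammaB (sigma (t + j)%N).

Definition G (sigma : nat -> S) (t : nat) : R :=
  limn (series (Gterm sigma t)).
End defs.

From HB Require Import structures.
From mathcomp Require Import all_boot all_order all_algebra.
From mathcomp Require Import all_classical all_reals all_analysis.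
From mathcomp Require Import lra.
Import Order.TTheory GRing.Theory Num.Theory numFieldNormedType.Exports.
Local Open Scope ring_scope.

(** Splitting off the first term gives [G_t = R_B(sigma[t]) + Gamma_B(sigma[t]) G_(t+1)],
   both for the partial sums and for their limits.  For every state [s] the affine
   map [x |-> R_B(s) + Gamma_B(s) x] lies between [x |-> g x] and
   [x |-> 1 - gB + gB x] on [[0, 1]], and the latter maps [[0, 1]] into itself.
   Hence all partial sums lie in [[0, 1]] by induction; being nondecreasing they
   converge, [G_(t+1)] lies in [[0, 1]], and the four inequalities follow. *)

Section affine_bounds.
Context {R : realType} {S : finType} (B : {set S}) {g gB : R}.
Hypotheses (g_ge0 : 0 <= g) (g_le1 : g <= 1) (gB_ge0 : 0 <= gB) (gB_le1 : gB <= 1).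

Lemma RB_ge0 s : 0 <= RB B gB s.
Proof. by rewrite /RB; case: ifP; rewrite ?subr_ge0. Qed.

Lemma GammaB_ge0 s : 0 <= GammaB B g gB s.
Proof. by rewrite /GammaB; case: ifP. Qed.

Lemma Gterm_ge0 sigma t i : 0 <= Gterm B g gB sigma t i.
Proof. by rewrite mulr_ge0 ?RB_ge0 // prodr_ge0 // => j _; exact: GammaB_ge0. Qed.

Lemma RB_GammaB_ge s x : 0 <= x -> x <= 1 -> g * x <= RB B gB s + GammaB B g gB s * x.
Proof.
move=> x_ge0 x_le1; rewrite /RB /GammaB; case: ifP => _; last by rewrite add0r.
have : 0 <= (1 - g) * x + (1 - gB) * (1 - x) by rewrite addr_ge0 ?mulr_ge0 ?subr_ge0.
by lra.
Qed.

Lemma RB_GammaB_le s x : 0 <= x -> x <= 1 ->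
  RB B gB s + GammaB B g gB s * x <= 1 - gB + gB * x.
Proof.
move=> x_ge0 x_le1; rewrite /RB /GammaB; case: ifP => _ //.
have : 0 <= (1 - g) * x + (1 - gB) * (1 - x) by rewrite addr_ge0 ?mulr_ge0 ?subr_ge0.
by lra.
Qed.

Lemma affine_gB_le1 x : x <= 1 -> 1 - gB + gB * x <= 1.
Proof.
move=> x_le1; have : 0 <= gB * (1 - x) by rewrite mulr_ge0 ?subr_ge0.
by lra.
Qed.

Lemma RB_GammaB_itv s x : 0 <= x <= 1 -> 0 <= RB B gB s + GammaB B g gB s * x <= 1.
Proof.
case/andP=> x_ge0 x_le1; apply/andP; split.
  by apply: le_trans _ (RB_GammaB_ge s x x_ge0 x_le1); rewrite mulr_ge0.
exact: le_trans (RB_GammaB_le s x x_ge0 x_le1) (affine_gB_le1 x x_le1).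
Qed.

Lemma RB_GammaB_sandwich s x : 0 <= x <= 1 ->
  0 <= g * x /\
  g * x <= RB B gB s + GammaB B g gB s * x /\
  RB B gB s + GammaB B g gB s * x <= 1 - gB + gB * x /\
  1 - gB + gB * x <= 1.
Proof.
case/andP=> x_ge0 x_le1.
by rewrite mulr_ge0 // RB_GammaB_ge // RB_GammaB_le // affine_gB_le1.
Qed.

Section trajectory.
Variable sigma : nat -> S.

Local Notation partial t := (series (Gterm B g gB sigma t)).

Lemma series_Gterm_recl t n :
  partial t n.+1 = RB B gB (sigma t) + GammaB B g gB (sigma t) * partial t.+1 n.
Proof.
rewrite /series /= big_nat_recl // big_distrr /= /Gterm big_ord0 mulr1 addn0.
congr (_ + _); apply: eq_bigr => i _.
rewrite big_ord_recl addn0 addSnnS mulrCA; congr (_ * (_ * _)).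
by apply: eq_bigr => j _; rewrite /bump /= addSnnS.
Qed.

Lemma series_Gterm_itv n t : 0 <= partial t n <= 1.
Proof.
elim: n t => [|n IHn] t; first by rewrite /series /= big_geq // lexx ler01.
by rewrite series_Gterm_recl RB_GammaB_itv.
Qed.

Lemma is_cvg_series_Gterm t : cvgn (partial t).
Proof.
apply: nondecreasing_is_cvgn.
  by apply: nondecreasing_series => i _ _; exact: Gterm_ge0.
by exists 1 => _ [n _ <-]; case/andP: (series_Gterm_itv n t).
Qed.

Lemma G_itv t : 0 <= G B g gB sigma t <= 1.
Proof.
have cvg_t := is_cvg_series_Gterm t.
apply/andP; split; [apply: limr_ge | apply: limr_le] => //;
  by near=> n; case/andP: (series_Gterm_itv n t).
Unshelve. all: by end_near.
Qed.

Lemma G_recl t :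
  G B g gB sigma t = RB B gB (sigma t) + GammaB B g gB (sigma t) * G B g gB sigma t.+1.
Proof.
apply: cvg_lim => //; rewrite -cvg_shiftS.
under eq_fun do rewrite /= series_Gterm_recl.
by apply: cvgD; [exact: cvg_cst | apply: cvgM; [exact: cvg_cst | exact: is_cvg_series_Gterm]].
Qed.

End trajectory.
End affine_bounds.

Theorem lemma2 (R : realType) (S : finType) (B : {set S}) (g gB : R)
  (hg0 : 0 < g) (hg1 : g < 1) (hgB0 : 0 < gB) (hgB1 : gB < 1)
  (sigma : nat -> S) (t : nat) :
  0 <= g * G B g gB sigma t.+1 /\
  g * G B g gB sigma t.+1 <= G B g gB sigma t /\
  G B g gB sigma t <= 1 - gB + gB * G B g gB sigma t.+1 /\
  1 - gB + gB * G B g gB sigma t.+1 <= 1.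
Proof.
have [g_ge0 g_le1 gB_ge0 gB_le1] := And4 (ltW hg0) (ltW hg1) (ltW hgB0) (ltW hgB1).
rewrite (G_recl B g_ge0 g_le1 gB_ge0 gB_le1 sigma t).
exact: RB_GammaB_sandwich (G_itv B g_ge0 g_le1 gB_ge0 gB_le1 sigma t.+1).
Qed.
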